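(* Let $S$ be a semigroup with finite $\mathcal{R}$-height, and let $A$ be a right ideal of $S$. Let $n$ be the maximum length of a chain of $\mathcal{R}$-classes of $S$ that are contained in $A$. Then $\mathrm{H}_{\mathcal{R}}(A)\leq 2n-1$.
   Context: For a semigroup $S$, $S^1$ denotes $S$ with an identity adjoined if necessary. Green's preorder: $a\leq_{\mathcal{R}} b$ iff $aS^1\subseteq bS^1$; $\mathcal{R}$ is the associated equivalence. $\mathcal{R}$-classes are ordered by $R_a\leq R_b$ iff $a\leq_{\mathcal{R}} b$, and the $\mathcal{R}$-height $\mathrm{H}_{\mathcal{R}}(S)$ is the supremum of the cardinalities of chains of $\mathcal{R}$-classes. A right ideal is a non-empty subset $A$ with $AS\subseteq A$; $\mathrm{H}_{\mathcal{R}}(A)$ is computed in the semigroup $A$ itself. *)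

From mathcomp Require Import all_boot.
Set Implicit Arguments. Unset Strict Implicit. Unset Printing Implicit Defensive.

Section Green.
Variables (T : Type) (mul : T -> T -> T).

(* x \in b P^1, computed inside the subsemigroup P (P = fun _ => True gives bS^1) *)
Definition inS1 (P : T -> Prop) (b x : T) : Prop :=
  x = b \/ exists s, P s /\ x = mul b s.

Definition leR (P : T -> Prop) (a b : T) : Prop :=
  forall x, inS1 P a x -> inS1 P b x.

Definition eqR (P : T -> Prop) (a b : T) : Prop := leR P a b /\ leR P b a.

Definition ltR (P : T -> Prop) (a b : T) : Prop := leR P a b /\ ~ leR P b a.

(* There is a chain of k R-classes (of the semigroup P) whose representatives
   all satisfy Q: representatives f 0 > f 1 > ... > f (k-1) (strictly). *)
Definition Rchain (P Q : T -> Prop) (k : nat) : Prop :=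
  exists f : nat -> T,
    (forall i, i < k -> P (f i) /\ Q (f i)) /\
    (forall i, i.+1 < k -> ltR P (f i.+1) (f i)).

Definition HR_le (P : T -> Prop) (N : nat) : Prop :=
  forall k, Rchain P P k -> k <= N.

Definition finite_R_height : Prop := exists N, HR_le (fun _ => True) N.

Definition right_ideal (A : T -> Prop) : Prop :=
  (exists a, A a) /\ forall a s, A a -> A (mul a s).

Definition Rclass_in (A : T -> Prop) (a : T) : Prop :=
  forall b, eqR (fun _ => True) b a -> A b.

Definition max_Rchain_in (A : T -> Prop) (n : nat) : Prop :=
  Rchain (fun _ => True) (Rclass_in A) n /\
  forall k, Rchain (fun _ => True) (Rclass_in A) k -> k <= n.

End Green.

(* Let a_0 > a_1 > ... > a_(k-1) be a chain of R-classes of the right ideal A.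
   Since A is a right ideal, a <=_R b in A implies a <=_R b in S, and any
   R-class of S meeting A lies in A. Going two steps down the chain in A is
   strict in S: if a_(i+2) = a_(i+1) v with v in A and a_i <=_R a_(i+2) in S,
   then a_i in a_(i+1) A^1, against a_(i+1) <_R a_i in A. Hence a_0, a_2, a_4,
   ... is a chain of R-classes of S inside A; when k is even, a_(k-1)^2 can be
   appended below a_(k-2), because y R y^2 in S would give y A^1 = y S^1. This
   yields floor(k/2) + 1 <= n classes, i.e. k <= 2n - 1. *)
From mathcomp Require Import all_boot zify.
Set Implicit Arguments. Unset Strict Implicit. Unset Printing Implicit Defensive.

Section RightIdealChains.
Variables (T : Type) (mul : T -> T -> T).
Hypothesis assoc : forall x y z, mul x (mul y z) = mul (mul x y) z.

Local Notation S := (fun _ : T => True).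

Lemma leR_trans (P : T -> Prop) a b c :
  leR mul P a b -> leR mul P b c -> leR mul P a c.
Proof. by move=> hab hbc x /hab /hbc. Qed.

Lemma leR_inS1 (P : T -> Prop) (mulP : forall s t, P s -> P (mul s t)) a b :
  leR mul P a b <-> inS1 mul P b a.
Proof.
split=> [|[->|[t [Pt ->]]] x [->|[s [Ps ->]]]]; first by apply; left.
- by left.
- by right; exists s.
- by right; exists t.
- by right; exists (mul t s); split; [apply: mulP|rewrite assoc].
Qed.

Lemma leRS_inS1 a b : leR mul S a b <-> inS1 mul S b a.
Proof. exact: leR_inS1. Qed.

Lemma leR_mulr a s : leR mul S (mul a s) a.
Proof. by apply/leRS_inS1; right; exists s. Qed.

Variable A : T -> Prop.
Hypothesis mulA : forall a s, A a -> A (mul a s).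

Lemma leR_ideal_inS1 a b : leR mul A a b <-> inS1 mul A b a.
Proof. exact: leR_inS1. Qed.

Lemma leR_idealS a b : leR mul A a b -> leR mul S a b.
Proof.
move=> /leR_ideal_inS1 hab; apply/leRS_inS1.
by case: hab => [->|[s [_ ->]]]; [left|right; exists s].
Qed.

Lemma Rclass_in_ideal a : A a -> Rclass_in mul A a.
Proof. by move=> Aa b [/leRS_inS1 [->|[s [_ ->]]] _] //; apply: mulA. Qed.

Lemma ltR_ideal_skip x y z :
  ltR mul A y x -> ltR mul A z y -> ltR mul S z x.
Proof.
move=> [hyx nxy] [hzy nyz]; split.
  exact: leR_trans (leR_idealS hzy) (leR_idealS hyx).
move=> /leRS_inS1 hxz.
case/leR_ideal_inS1: hzy => [ezy|[v [Av ezy]]].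
  by apply: nyz; rewrite ezy.
apply: nxy; apply/leR_ideal_inS1.
case: hxz => [->|[w [_ ->]]]; first by right; exists v.
by right; exists (mul v w); split; [apply: mulA|rewrite ezy assoc].
Qed.

Lemma ltR_ideal_sq x y : A y -> ltR mul A y x -> ltR mul S (mul y y) x.
Proof.
move=> Ay [hyx nxy]; have hyxS := leR_idealS hyx.
split; first exact: leR_trans (@leR_mulr y y) hyxS.
move=> hxyy; apply: nxy; apply/leR_ideal_inS1.
have /leRS_inS1 hy := leR_trans hyxS hxyy.
case/leRS_inS1: (leR_trans hxyy (@leR_mulr y y)) => [->|[w [_ ->]]].
  by left.
case: hy => [ey|[r [_ ey]]].
  by right; exists (mul y w); split; [apply: mulA|rewrite {1}ey -assoc].
right; exists (mul y (mul r w)); split; first exact: mulA.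
by rewrite {1}ey !assoc.
Qed.

Lemma Rchain_ideal_halve k :
  0 < k -> Rchain mul A A k -> Rchain mul S (Rclass_in mul A) k./2.+1.
Proof.
move=> k_gt0 [f [Af ltf]].
have {}Af i : i < k -> A (f i) by move=> /Af [].
pose y := f k.-1.
have Ay : A y by apply: Af; lia.
exists (fun i => if 2 * i < k then f (2 * i) else mul y y); split.
  move=> i _; split=> //; apply: Rclass_in_ideal.
  by case: ifP => [/Af|_] //; apply: mulA.
move=> i lt_i; have lt2i : 2 * i < k by lia.
rewrite lt2i; case: ifP => [lt2i2|ge2i2].
  have -> : 2 * i.+1 = (2 * i).+2 by lia.
  by apply: ltR_ideal_skip; apply: ltf; lia.
have ey : k.-1 = (2 * i).+1 by lia.
by apply: ltR_ideal_sq => //; rewrite /y ey; apply: ltf; lia.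
Qed.

End RightIdealChains.

Theorem theorem3p6 (T : Type) (mul : T -> T -> T)
    (assoc : forall x y z, mul x (mul y z) = mul (mul x y) z)
    (hfin : finite_R_height mul)
    (A : T -> Prop) (hA : right_ideal mul A)
    (n : nat) (hn : max_Rchain_in mul A n) :
  HR_le mul A (2 * n - 1).
Proof.
case: hA => _ mulA; case: hn => _ maxn_chain.
move=> [|k] chainA //.
have := maxn_chain _ (Rchain_ideal_halve assoc mulA (ltn0Sn k) chainA).
have := odd_double_half k.+1; lia.
Qed.
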